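(* Let $N\ge 1$ and $S_1,\dots,S_N\ge 1$. Consider an $S_1\times\cdots\times S_N$-setting $N$-partite correlation experiment in which party $n$ performs measurements $s_n\in\{1,\dots,S_n\}$ with outcomes $\lambda_n^{(s_n)}$ in a measurable space $\Lambda_n^{(s_n)}$ (of any type, discrete or continuous), described by joint probability distributions $P_{(s_1,\dots,s_N)}$ on $\Lambda_1^{(s_1)}\times\cdots\times\Lambda_N^{(s_N)}$, and suppose the experiment admits an LHV model (conditional or unconditional). Write $\lambda_n=(\lambda_n^{(1)},\dots,\lambda_n^{(S_n)})$ and $\Lambda_n=\Lambda_n^{(1)}\times\cdots\times\Lambda_n^{(S_n)}$. (i) For any collection $\{\Psi_{(s_1,\dots,s_N)}\}$ of bounded measurable real-valued functions, $\Psi_{(s_1,\dots,s_N)}$ defined on $\Lambda_1^{(s_1)}\times\cdots\times\Lambda_N^{(s_N)}$, the following tight linear LHV constraint holds: $$\inf_{\lambda_1\in\Lambda_1,\dots,\lambda_N\in\Lambda_N}\sum_{s_1,\dots,s_N}\Psi_{(s_1,\dots,s_N)}(\lambda_1^{(s_1)},\dots,\lambda_N^{(s_N)})\le\sum_{s_1,\dots,s_N}\big\langle\Psi_{(s_1,\dots,s_N)}(\lambda_1^{(s_1)},\dots,\lambda_N^{(s_N)})\big\rangle_{LHV}\le\sup_{\lambda_1\in\Lambda_1,\dots,\lambda_N\in\Lambda_N}\sum_{s_1,\dots,s_N}\Psi_{(s_1,\dots,s_N)}(\lambda_1^{(s_1)},\dots,\lambda_N^{(s_N)}).$$ (ii)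 In particular, for any bounded measurable real-valued functions $\phi_n^{(s_n)}$ on $\Lambda_n^{(s_n)}$ (all $s_n$, $n$) and any real coefficients $\gamma_{(s_1,\dots,s_N)}$, the tight linear LHV constraint $$\inf_{\xi_1\in\Phi_1,\dots,\xi_N\in\Phi_N}F_N^{(\gamma)}(\xi_1,\dots,\xi_N)\le\sum_{s_1,\dots,s_N}\gamma_{(s_1,\dots,s_N)}\big\langle\phi_1^{(s_1)}(\lambda_1^{(s_1)})\cdots\phi_N^{(s_N)}(\lambda_N^{(s_N)})\big\rangle_{LHV}\le\sup_{\xi_1\in\Phi_1,\dots,\xi_N\in\Phi_N}F_N^{(\gamma)}(\xi_1,\dots,\xi_N)$$ holds, where $F_N^{(\gamma)}(\xi_1,\dots,\xi_N)=\sum_{s_1,\dots,s_N}\gamma_{(s_1,\dots,s_N)}\,\xi_1^{(s_1)}\cdots\xi_N^{(s_N)}$ is the $N$-linear form of vectors $\xi_n=(\xi_n^{(1)},\dots,\xi_n^{(S_n)})\in\mathbb{R}^{S_n}$, and $\Phi_n=\{\xi_n\in\mathbb{R}^{S_n}:\ \xi_n^{(s_n)}=\phi_n^{(s_n)}(\lambda_n^{(s_n)}),\ \lambda_n^{(s_n)}\in\Lambda_n^{(s_n)},\ s_n=1,\dots,S_n\}$.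
   Context: All sums over $s_n$ range over $1,\dots,S_n$. For a joint measurement $(s_1,\dots,s_N)$ and a bounded measurable real function $\Psi$, $\langle\Psi(\lambda_1^{(s_1)},\dots,\lambda_N^{(s_N)})\rangle=\int\Psi\,dP_{(s_1,\dots,s_N)}$; the subscript LHV indicates the experiment admits an LHV model. The experiment admitting an LHV model (conditional or unconditional) is characterized by the existence of a probability measure $\mu$ on $\Lambda_1\times\cdots\times\Lambda_N$ (joint distribution of all outcomes of all measurements at all sites) such that every $P_{(s_1,\dots,s_N)}$ is the marginal of $\mu$ on the coordinates $(\lambda_1^{(s_1)},\dots,\lambda_N^{(s_N)})$. A linear LHV constraint is called tight if, within the class of experiments (with the given outcome sets) admitting an LHV model, its bounds cannot be improved. *)

From HB Require Import structures.
From mathcomp Require Import all_boot all_order all_algebra.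
From mathcomp Require Import all_classical all_reals all_analysis.
Set Implicit Arguments.
Unset Strict Implicit.
Unset Printing Implicit Defensive.
Import Order.TTheory GRing.Theory Num.Theory.
Local Open Scope classical_set_scope.
Local Open Scope ring_scope.

Section dprod.
Variables (I : finType) (d : I -> measure_display)
          (T : forall i, measurableType (d i)).

Definition dprod_cylinders : set (set (forall i, T i)) :=
  [set A | exists i (B : set (T i)), measurable B /\ A = (fun x => x i) @^-1` B].

Definition dprodM := g_sigma_algebraType dprod_cylinders.
End dprod.

(* Lam n k is the outcome space Lambda_n^{(k)} of measurement k of      *)
(* party n (parties and settings indexed from 0).                       *)
Section experiment.
Unset Implicit Arguments.
Variables (R : realType) (N : nat) (S : 'I_N -> nat)
  (d : forall n : 'I_N, 'I_(S n) -> measure_display)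
  (Lam : forall (n : 'I_N) (k : 'I_(S n)), measurableType (d n k)).
Set Implicit Arguments.

Definition setting := {dffun forall n : 'I_N, 'I_(S n)}.

Definition jointSpace (s : setting) := dprodM (fun n : 'I_N => Lam n (s n)).

Definition partySpace (n : 'I_N) := dprodM (fun k : 'I_(S n) => Lam n k).

Definition allSpace := dprodM partySpace.

Definition marg (s : setting) (l : allSpace) : jointSpace s :=
  fun n => l n (s n).

Definition experiment := forall s : setting, probability (jointSpace s) R.

Definition admits_LHV (P : experiment) : Prop :=
  exists mu : probability allSpace R,
    forall (s : setting) (A : set (jointSpace s)),
      measurable A -> P s A = mu (marg s @^-1` A).

Definition expect (P : experiment) (s : setting) (f : jointSpace s -> R) : R :=
  Rintegral (P s) setT f.

End experiment.

Arguments expect {R N S d Lam} P s f.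
Arguments marg {N S d Lam} s l.

(** If mu is a hidden-variable measure for the experiment, every P_s is the
    image of mu under the projection [marg s], so the sum of the expectations
    equals the mu-average of the single function
      V(l) = sum_s Psi_s(l_1^(s_1), ..., l_N^(s_N))
    of the outcomes l of all measurements; as mu is a probability, this average
    lies between inf V and sup V.  The bounds are tight because the
    deterministic experiment with hidden-variable measure the Dirac mass at l
    is an LHV experiment whose sum of expectations is exactly V(l).
    Part (ii) is the case Psi_s = gamma_s * prod_n phi_n^(s_n), for which the
    range of V is the set of values of the N-linear form on Phi_1 x ... x Phi_N. *)
From HB Require Import structures.
From mathcomp Require Import all_boot all_order all_algebra.
From mathcomp Require Import all_classical all_reals all_analysis.
Import Order.TTheory GRing.Theory Num.Theory.
Set Implicit Arguments.
Unset Strict Implicit.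
Local Open Scope classical_set_scope.
Local Open Scope ring_scope.

Section bounded_measurable.
Context d (T : measurableType d) (R : realType).
Implicit Types f g : T -> R.

Definition bounded_measurable f :=
  measurable_fun setT f /\ exists M, forall x, `|f x| <= M.

Lemma bounded_measurable_of_bounded_fun f :
  measurable_fun setT f -> bounded_fun f -> bounded_measurable f.
Proof.
move=> mf bf; split=> //.
have [M _ hM] := ex_strict_bound_gt0 bf.
by exists M => x; apply/ltW/hM.
Qed.

Lemma bounded_measurable_bounded f :
  bounded_measurable f -> [bounded f x | x in setT].
Proof.
case=> _ [M hM]; exists M; split; first exact: num_real.
by move=> y My x _; apply: le_trans (hM x) (ltW My).
Qed.

Lemma bounded_measurable_range f : bounded_measurable f ->
  has_lbound (range f) /\ has_ubound (range f).
Proof.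
move/bounded_measurable_bounded => bf.
by split; [exact: bounded_fun_has_lbound | exact: bounded_fun_has_ubound].
Qed.

Lemma bounded_measurable_cst (c : R) : bounded_measurable (fun=> c).
Proof. by split; [exact: measurable_cst | exists `|c|]. Qed.

Lemma bounded_measurableD f g : bounded_measurable f -> bounded_measurable g ->
  bounded_measurable (fun x => f x + g x).
Proof.
move=> [mf [M hM]] [mg [K hK]].
split; first exact: measurable_realfun.measurable_funD.
by exists (M + K) => x; apply: le_trans (ler_normD _ _) _; exact: lerD.
Qed.

Lemma bounded_measurableM f g : bounded_measurable f -> bounded_measurable g ->
  bounded_measurable (fun x => f x * g x).
Proof.
move=> [mf [M hM]] [mg [K hK]].
split; first exact: measurable_realfun.measurable_funM.
by exists (M * K) => x; rewrite normrM; exact: ler_pM.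
Qed.

Lemma bounded_measurable_sum I (r : seq I) (F : I -> T -> R) :
  (forall i, bounded_measurable (F i)) ->
  bounded_measurable (fun x => \sum_(i <- r) F i x).
Proof.
move=> hF; elim: r => [|i r ih]; under eq_fun do rewrite ?big_nil ?big_cons.
- exact: bounded_measurable_cst.
- exact: bounded_measurableD.
Qed.

Lemma bounded_measurable_prod I (r : seq I) (F : I -> T -> R) :
  (forall i, bounded_measurable (F i)) ->
  bounded_measurable (fun x => \prod_(i <- r) F i x).
Proof.
move=> hF; elim: r => [|i r ih]; under eq_fun do rewrite ?big_nil ?big_cons.
- exact: bounded_measurable_cst.
- exact: bounded_measurableM.
Qed.

Section finite_measure.
Variable mu : {finite_measure set T -> \bar R}.

Lemma bounded_measurable_integrable f :
  bounded_measurable f -> mu.-integrable setT (EFin \o f).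
Proof.
move=> bf; apply: measurable_bounded_integrable => //.
- by rewrite ltey_eq fin_num_measure.
- by case: bf.
- exact: bounded_measurable_bounded.
Qed.

Lemma Rintegral_sum I (r : seq I) (F : I -> T -> R) :
  (forall i, bounded_measurable (F i)) ->
  Rintegral mu setT (fun x => \sum_(i <- r) F i x) =
  \sum_(i <- r) Rintegral mu setT (F i).
Proof.
move=> hF; elim: r => [|i r ih].
  under eq_Rintegral do rewrite big_nil.
  by rewrite big_nil Rintegral_cst // mul0r.
under eq_Rintegral do rewrite big_cons.
rewrite big_cons RintegralD ?ih //; apply: bounded_measurable_integrable => //.
exact: bounded_measurable_sum.
Qed.

End finite_measure.

Section probability.
Variable mu : probability T R.

Lemma Rintegral_cst_probability (c : R) : Rintegral mu setT (fun=> c) = c.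
Proof.
rewrite Rintegral_cst // [fine _](_ : _ = 1) ?mulr1 //.
exact: (congr1 fine (probability_setT mu)).
Qed.

Lemma Rintegral_range_bounds f : bounded_measurable f ->
  inf (range f) <= Rintegral mu setT f <= sup (range f).
Proof.
move=> bf; have [lbf ubf] := bounded_measurable_range bf.
have intf := bounded_measurable_integrable mu bf.
have intc c := bounded_measurable_integrable mu (bounded_measurable_cst c).
apply/andP; split.
- rewrite -[X in X <= _]Rintegral_cst_probability.
  by apply: le_Rintegral => // x _; apply: ge_inf; last exists x.
- rewrite -[X in _ <= X]Rintegral_cst_probability.
  by apply: le_Rintegral => // x _; apply: ub_le_sup; last exists x.
Qed.

End probability.

Lemma Rintegral_dirac (a : T) f : measurable_fun setT f ->
  Rintegral (\d_a : probability T R) setT f = f a.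
Proof.
move=> mf; rewrite /Rintegral integral_dirac ?diracT ?mul1e //.
exact/measurable_realfun.measurable_EFinP.
Qed.

End bounded_measurable.

Lemma bounded_measurable_comp d d' (T : measurableType d) (U : measurableType d')
  (R : realType) (h : U -> T) (f : T -> R) :
  measurable_fun setT h -> bounded_measurable f -> bounded_measurable (f \o h).
Proof.
move=> mh [mf [M hM]]; split; first exact: measurableT_comp.
by exists M => x; exact: hM.
Qed.

Section LHV_experiment.
Unset Implicit Arguments.
Variables (R : realType) (N : nat) (S : 'I_N -> nat)
  (d : forall n : 'I_N, 'I_(S n) -> measure_display)
  (Lam : forall (n : 'I_N) (k : 'I_(S n)), measurableType (d n k)).
Set Implicit Arguments.

Lemma measurable_coord (s : setting S) (n : 'I_N) :
  measurable_fun setT (fun x : jointSpace Lam s => x n).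
Proof.
by move=> _ B mB; rewrite setTI; apply: sub_sigma_algebra; exists n, B.
Qed.

Lemma measurable_marg (s : setting S) :
  measurable_fun setT (marg s : allSpace Lam -> jointSpace Lam s).
Proof.
apply: (@measurability _ _ (allSpace Lam) (jointSpace Lam s) setT (marg s)
  (@dprod_cylinders _ _ (fun n => Lam n (s n))) erefl).
move=> _ [_ [n [B [mB ->]]] <-]; rewrite setTI; apply: sub_sigma_algebra.
exists n, ((fun y : partySpace Lam n => y (s n)) @^-1` B); split => //.
by apply: sub_sigma_algebra; exists (s n), B.
Qed.

Lemma bounded_measurable_marg (s : setting S) (f : jointSpace Lam s -> R) :
  bounded_measurable f -> bounded_measurable (f \o marg s).
Proof. by apply: bounded_measurable_comp; exact: measurable_marg. Qed.

Definition LHV_model (Q : experiment R Lam) (mu : probability (allSpace Lam) R) :=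
  forall s A, measurable A -> Q s A = mu (marg s @^-1` A).

Lemma expect_LHV (Q : experiment R Lam) (mu : probability (allSpace Lam) R) :
  LHV_model Q mu -> forall s (f : jointSpace Lam s -> R), bounded_measurable f ->
  expect Q s f = Rintegral mu setT (f \o marg s).
Proof.
move=> hQ s f bf; rewrite /expect /Rintegral; congr fine.
have := @integral_pushforward _ _ _ _ R (marg s) (@measurable_marg s) mu setT
  (EFin \o f).
rewrite preimage_setT => <- //.
- apply: eq_measure_integral => [|mmarg A mA _]; first exact: measurable_marg.
  exact: hQ.
- by apply/measurable_realfun.measurable_EFinP; case: bf.
- exact/bounded_measurable_integrable/bounded_measurable_marg.
Qed.

Definition dirac_experiment (l : allSpace Lam) : experiment R Lam :=
  fun s => (\d_(marg s l) : probability (jointSpace Lam s) R).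

Lemma admits_LHV_dirac (l : allSpace Lam) : admits_LHV (dirac_experiment l).
Proof.
exists (\d_l : probability (allSpace Lam) R) => s A mA /=; rewrite !diracE.
by have [Al|Al] := pselect (A (marg s l)); [rewrite !mem_set | rewrite !memNset].
Qed.

Section linear_constraint.
Unset Implicit Arguments.
Variable Psi : forall s : setting S, jointSpace Lam s -> R.
Set Implicit Arguments.
Hypothesis bPsi : forall s, bounded_measurable (Psi s).

Definition LHV_value (l : allSpace Lam) : R :=
  \sum_(s : setting S) Psi s (marg s l).

Definition LHV_expectation (Q : experiment R Lam) : R :=
  \sum_(s : setting S) expect Q s (Psi s).

Lemma bounded_measurable_LHV_value : bounded_measurable LHV_value.
Proof.
by apply: bounded_measurable_sum => s; exact: bounded_measurable_marg.
Qed.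

Lemma LHV_expectationE (Q : experiment R Lam)
  (mu : probability (allSpace Lam) R) :
  LHV_model Q mu -> LHV_expectation Q = Rintegral mu setT LHV_value.
Proof.
move=> hQ.
rewrite /LHV_value (@Rintegral_sum _ _ _ mu _ _ (fun s => Psi s \o marg s)).
- by apply: eq_bigr => s _; exact: expect_LHV.
- by move=> s; exact: bounded_measurable_marg.
Qed.

Lemma LHV_expectation_dirac (l : allSpace Lam) :
  LHV_expectation (dirac_experiment l) = LHV_value l.
Proof.
by apply: eq_bigr => s _; rewrite /expect Rintegral_dirac //; case: (bPsi s).
Qed.

Lemma LHV_expectation_bounds (Q : experiment R Lam) : admits_LHV Q ->
  inf (range LHV_value) <= LHV_expectation Q <= sup (range LHV_value).
Proof.
move=> [mu hmu]; rewrite (LHV_expectationE hmu).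
exact/Rintegral_range_bounds/bounded_measurable_LHV_value.
Qed.

Lemma LHV_constraint_tight (P : experiment R Lam) : admits_LHV P ->
  let V := LHV_value in let E := LHV_expectation in
  (inf (range V) <= E P /\ E P <= sup (range V)) /\
  (forall c : R, (forall Q, admits_LHV Q -> c <= E Q) -> c <= inf (range V)) /\
  (forall c : R, (forall Q, admits_LHV Q -> E Q <= c) -> sup (range V) <= c).
Proof.
move=> hP V E.
have [lbV ubV] := bounded_measurable_range bounded_measurable_LHV_value.
have V_neq0 : range V !=set0 by exists (V point), point.
have E_dirac l : E (dirac_experiment l) = V l := LHV_expectation_dirac l.
split; [|split] => [|c hc|c hc].
- exact/andP/LHV_expectation_bounds.
- apply: lb_le_inf => // _ [l _ <-]; rewrite -E_dirac.
  exact/hc/admits_LHV_dirac.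
- apply: ge_sup => // _ [l _ <-]; rewrite -E_dirac.
  exact/hc/admits_LHV_dirac.
Qed.

End linear_constraint.

Section product_observable.
Unset Implicit Arguments.
Variables (phi : forall (n : 'I_N) (k : 'I_(S n)), Lam n k -> R)
  (gamma : setting S -> R).
Set Implicit Arguments.

Definition product_observable (s : setting S) (x : jointSpace Lam s) : R :=
  gamma s * \prod_(n < N) phi n (s n) (x n).
(* [s] can be inferred from [x], but must stay explicit so that
   [product_observable] is the family of observables indexed by settings. *)
Arguments product_observable s x : clear implicits.

Hypothesis bphi : forall n k, bounded_measurable (phi n k).

Lemma bounded_measurable_phi_prod (s : setting S) :
  bounded_measurable
    (fun x : jointSpace Lam s => \prod_(n < N) phi n (s n) (x n)).
Proof.
apply: bounded_measurable_prod => n.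
apply: (@bounded_measurable_comp _ _ _ _ _ (fun x : jointSpace Lam s => x n)).
- exact: measurable_coord.
- exact: bphi.
Qed.

Lemma bounded_measurable_product_observable (s : setting S) :
  bounded_measurable (product_observable s).
Proof.
exact: bounded_measurableM (bounded_measurable_cst _ _)
  (bounded_measurable_phi_prod s).
Qed.

Lemma product_expectationE (Q : experiment R Lam) :
  \sum_(s : setting S) gamma s *
    expect Q s (fun x : jointSpace Lam s => \prod_(n < N) phi n (s n) (x n)) =
  LHV_expectation product_observable Q.
Proof.
apply: eq_bigr => s _; rewrite /expect RintegralZl //.
exact/bounded_measurable_integrable/bounded_measurable_phi_prod.
Qed.

Lemma multilinear_form_values :
  [set \sum_(s : setting S) gamma s * \prod_(n < N) xi n (s n) | xi in
    [set xi : forall n : 'I_N, 'I_(S n) -> R | forall n,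
      exists l : forall k : 'I_(S n), Lam n k, forall k, xi n k = phi n k (l k)]] =
  range (LHV_value product_observable).
Proof.
apply/seteqP; split.
- move=> _ [xi hxi <-]; exists (fun n => projT1 (cid (hxi n))) => //.
  apply: eq_bigr => s _; congr (_ * _); apply: eq_bigr => n _.
  by rewrite (projT2 (cid (hxi n))).
- move=> _ [l _ <-]; exists (fun n k => phi n k (l n k)) => //.
  by move=> n; exists (l n).
Qed.

End product_observable.

End LHV_experiment.

Arguments product_observable {R N S d Lam} phi gamma s x.

Theorem theorem1 (R : realType) (N : nat) (S : 'I_N -> nat)
  (d : forall n : 'I_N, 'I_(S n) -> measure_display)
  (Lam : forall (n : 'I_N) (k : 'I_(S n)), measurableType (d n k))
  (hN : (1 <= N)%N) (hS : forall n, (1 <= S n)%N)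
  (P : experiment R Lam) (hP : admits_LHV P) :
  (* (i) *)
  (forall Psi : forall s : setting S, jointSpace Lam s -> R,
     (forall s, measurable_fun setT (Psi s)) ->
     (forall s, bounded_fun (Psi s)) ->
     let V := fun l : allSpace Lam => \sum_(s : setting S) Psi s (marg s l) in
     let E := fun Q : experiment R Lam => \sum_(s : setting S) expect Q s (Psi s) in
     (inf (range V) <= E P /\ E P <= sup (range V)) /\
     (* tightness: the bounds cannot be improved within LHV experiments *)
     (forall c : R, (forall Q, admits_LHV Q -> c <= E Q) -> c <= inf (range V)) /\
     (forall c : R, (forall Q, admits_LHV Q -> E Q <= c) -> sup (range V) <= c)) /\
  (* (ii) *)
  (forall (phi : forall (n : 'I_N) (k : 'I_(S n)), Lam n k -> R)
          (gamma : setting S -> R),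
     (forall n k, measurable_fun setT (phi n k)) ->
     (forall n k, bounded_fun (phi n k)) ->
     let F := fun xi : forall n : 'I_N, 'I_(S n) -> R =>
       \sum_(s : setting S) gamma s * \prod_(n < N) xi n (s n) in
     let Phi := fun n : 'I_N => [set xi : 'I_(S n) -> R |
       exists l : forall k : 'I_(S n), Lam n k, forall k, xi k = phi n k (l k)] in
     let Fvals := [set F xi | xi in [set xi | forall n, Phi n (xi n)]] in
     let E := fun Q : experiment R Lam => \sum_(s : setting S) gamma s *
        expect Q s (fun x : jointSpace Lam s => \prod_(n < N) phi n (s n) (x n)) in
     (inf Fvals <= E P /\ E P <= sup Fvals) /\
     (forall c : R, (forall Q, admits_LHV Q -> c <= E Q) -> c <= inf Fvals) /\
     (forall c : R, (forall Q, admits_LHV Q -> E Q <= c) -> sup Fvals <= c)).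
Proof.
split.
- move=> Psi mPsi bPsi.
  exact: (LHV_constraint_tight (fun s => bounded_measurable_of_bounded_fun (mPsi s) (bPsi s)) hP).
- move=> phi gamma mphi bphi F Phi Fvals E.
  have bphi' n k := bounded_measurable_of_bounded_fun (mphi n k) (bphi n k).
  have -> : Fvals = range (LHV_value (product_observable phi gamma)).
    exact: multilinear_form_values.
  have -> : E = LHV_expectation (product_observable phi gamma).
    by apply: funext => Q; exact: product_expectationE.
  exact: (LHV_constraint_tight (bounded_measurable_product_observable gamma bphi') hP).
Qed.
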